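(* Let $K$ be a field of characteristic $0$, let $S=K[x_1,\ldots,x_n]$ be graded by $\deg x_i=a_i>0$, and let $I\subsetneq S$ be a graded ideal which is strongly Golod, i.e. $\partial(I)^2\subseteq I$, where $\partial(I)$ is the ideal generated by all $\partial f/\partial x_i$ with $f\in I$, $1\le i\le n$. Let $P$ be a homogeneous prime ideal of $S$ containing $I$. Then $I+P^k$ is strongly Golod (i.e. $\partial(I+P^k)^2\subseteq I+P^k$) for all $k\ge2$. *)

From HB Require Import structures.
From mathcomp Require Import all_boot all_order all_algebra.
From mathcomp Require Export mpoly.
Set Implicit Arguments. Unset Strict Implicit. Unset Printing Implicit Defensive.
Import GRing.Theory.
Local Open Scope ring_scope.

Section Defs.
Variables (K : fieldType) (n : nat).
Notation S := {mpoly K[n]}.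

Definition pset := S -> Prop.

Definition subset_of (A B : pset) : Prop := forall x, A x -> B x.

Definition is_ideal (I : pset) : Prop :=
  [/\ I 0, (forall x y, I x -> I y -> I (x + y)) & (forall r x, I x -> I (r * x))].

Definition is_proper_ideal (I : pset) : Prop := is_ideal I /\ ~ I 1.

Definition gen_ideal (A : pset) : pset :=
  fun x => forall J, is_ideal J -> subset_of A J -> J x.

Definition ideal_add (I J : pset) : pset := gen_ideal (fun x => I x \/ J x).

Definition ideal_mul (I J : pset) : pset :=
  gen_ideal (fun x => exists a b, [/\ I a, J b & x = a * b]).

Fixpoint ideal_pow (P : pset) (k : nat) : pset :=
  match k with
  | 0%N => fun _ => True
  | k'.+1 => ideal_mul (ideal_pow P k') P
  end.

Definition deriv_ideal (I : pset) : pset :=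
  gen_ideal (fun g => exists f i, I f /\ g = f^`M(i)).

Definition strongly_golod (I : pset) : Prop :=
  subset_of (ideal_mul (deriv_ideal I) (deriv_ideal I)) I.

Definition wdeg (a : 'I_n -> nat) (m : 'X_{1..n}) : nat := (\sum_(i < n) a i * m i)%N.

Definition hcomp (a : 'I_n -> nat) (d : nat) (p : S) : S :=
  \sum_(m <- msupp p | wdeg a m == d) p@_m *: 'X_[m].

Definition graded_ideal (a : 'I_n -> nat) (I : pset) : Prop :=
  is_ideal I /\ forall f d, I f -> I (hcomp a d f).

Definition is_prime_ideal (P : pset) : Prop :=
  is_proper_ideal P /\ forall x y, P (x * y) -> P x \/ P y.

End Defs.

Arguments subset_of {K n}. Arguments is_ideal {K n}. Arguments is_proper_ideal {K n}.
Arguments gen_ideal {K n}. Arguments ideal_add {K n}. Arguments ideal_mul {K n}.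
Arguments ideal_pow {K n}. Arguments deriv_ideal {K n}. Arguments strongly_golod {K n}.
Arguments wdeg {n}. Arguments hcomp {K n}. Arguments graded_ideal {K n}.
Arguments is_prime_ideal {K n}.

From HB Require Import structures.
From mathcomp Require Import all_boot all_order all_algebra.
From mathcomp Require Import mpoly.
Local Open Scope ring_scope.
Import GRing.Theory.
Set Implicit Arguments.
Unset Strict Implicit.

(* Write J = I + P^k with k = m + 2.  By the Leibniz rule,
   ∂(J) ⊆ ∂(I) + I + P^(m+1), and ∂(I) ⊆ P because (∂f)^2 ∈ ∂(I)^2 ⊆ I ⊆ P
   and P is prime.  Hence every product of two generators of ∂(J) lies in J:
   ∂(I)∂(I) ⊆ I, I·S ⊆ I, and P·P^(m+1) ⊆ P^(m+2). *)

Section Ideals.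
Variables (K : fieldType) (n : nat).
Notation S := {mpoly K[n]}.
Implicit Types (A B I J Q P : pset K n) (x y r f g : S).

Lemma ideal0 J : is_ideal J -> J 0.
Proof. by case. Qed.

Lemma idealD J x y : is_ideal J -> J x -> J y -> J (x + y).
Proof. by case=> _ HD _; apply: HD. Qed.

Lemma idealMl J r x : is_ideal J -> J x -> J (r * x).
Proof. by case=> _ _ HM; apply: HM. Qed.

Lemma idealMr J r x : is_ideal J -> J x -> J (x * r).
Proof. by rewrite mulrC; apply: idealMl. Qed.

Lemma gen_ideal_is_ideal A : is_ideal (gen_ideal A).
Proof.
split=> [J [] // | x y Hx Hy J HJ HA | r x Hx J HJ HA].
- by apply: idealD => //; [apply: Hx | apply: Hy].
- by apply: idealMl => //; apply: Hx.
Qed.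

Lemma gen_ideal_sub A : subset_of A (gen_ideal A).
Proof. by move=> x Ax J _; apply. Qed.

Lemma gen_ideal_min A J : is_ideal J -> subset_of A J -> subset_of (gen_ideal A) J.
Proof. by move=> HJ HA x; apply. Qed.

Lemma ideal_mul_mono I1 I2 J1 J2 :
  subset_of I1 J1 -> subset_of I2 J2 ->
  subset_of (ideal_mul I1 I2) (ideal_mul J1 J2).
Proof.
move=> sI sJ; apply: gen_ideal_min; first exact: gen_ideal_is_ideal.
move=> _ [x [y [Hx Hy ->]]]; apply: gen_ideal_sub.
by exists x, y; split; [apply: sI | apply: sJ |].
Qed.

Lemma ideal_mul_gen_sub A B J : is_ideal J ->
  (forall x y, A x -> B y -> J (x * y)) ->
  subset_of (ideal_mul (gen_ideal A) (gen_ideal B)) J.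
Proof.
move=> HJ HAB; apply: gen_ideal_min => // _ [x [y [Hx Hy ->]]].
have mulB y' : B y' -> subset_of (gen_ideal A) (fun x' => J (x' * y')).
  move=> By'; apply: gen_ideal_min => [|x' Ax']; last exact: HAB.
  split=> [|u v Ju Jv|r u Ju]; first by rewrite mul0r; apply: ideal0.
  - by rewrite mulrDl; apply: idealD.
  - by rewrite -mulrA; apply: idealMl.
suff : subset_of (gen_ideal B) (fun y' => J (x * y')) by apply.
apply: gen_ideal_min => [|y' By']; last exact: mulB.
split=> [|u v Ju Jv|r u Ju]; first by rewrite mulr0; apply: ideal0.
- by rewrite mulrDr; apply: idealD.
- by rewrite mulrCA; apply: idealMl.
Qed.

Lemma gen_ideal_mderiv A Q : is_ideal Q -> subset_of A Q ->
  (forall g i, A g -> Q g^`M(i)) ->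
  forall f i, gen_ideal A f -> Q f^`M(i).
Proof.
move=> HQ sAQ dAQ f i Af.
suff sAT : subset_of (gen_ideal A) (fun f => Q f /\ forall i, Q f^`M(i)).
  by case: (sAT f Af).
apply: gen_ideal_min => [|g Ag]; last by split=> [|j]; [apply: sAQ | apply: dAQ].
split=> [|u v [Qu dQu] [Qv dQv]|r u [Qu dQu]].
- by split=> [|j]; rewrite ?mderiv0; apply: ideal0.
- by split=> [|j]; rewrite ?mderivD; apply: idealD.
- split=> [|j]; first exact: idealMl.
  by rewrite mderivM; apply: (idealD HQ); apply: (idealMl _ HQ).
Qed.

Lemma ideal_pow_is_ideal P k : is_ideal (ideal_pow P k).
Proof. by case: k => [|k] /=; [split | apply: gen_ideal_is_ideal]. Qed.

Lemma ideal_pow_mul P k x y :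
  ideal_pow P k x -> P y -> ideal_pow P k.+1 (x * y).
Proof. by move=> Hx Hy; apply: gen_ideal_sub; exists x, y. Qed.

Lemma ideal_powS_sub P k : subset_of (ideal_pow P k.+1) (ideal_pow P k).
Proof.
apply: gen_ideal_min; first exact: ideal_pow_is_ideal.
by move=> _ [x [y [Hx _ ->]]]; apply: idealMr => //; apply: ideal_pow_is_ideal.
Qed.

Lemma ideal_pow1_sub P k : is_ideal P -> subset_of (ideal_pow P k.+1) P.
Proof.
by move=> HP; apply: gen_ideal_min => // _ [x [y [_ Hy ->]]]; apply: idealMl.
Qed.

Lemma mderiv_ideal_pow P k f i :
  ideal_pow P k.+1 f -> ideal_pow P k f^`M(i).
Proof.
elim: k => [//|k IHk] in f i *; apply: gen_ideal_mderiv.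
- exact: ideal_pow_is_ideal.
- move=> _ [x [y [Hx _ ->]]].
  exact: idealMr (ideal_pow_is_ideal P k.+1) Hx.
move=> _ j [x [y [Hx Hy ->]]]; rewrite mderivM.
have HPk := ideal_pow_is_ideal P k.+1.
apply: (idealD HPk); first exact: ideal_pow_mul (IHk _ _ Hx) Hy.
exact: idealMr HPk Hx.
Qed.

Definition deriv_image I : pset K n := fun g => exists f i, I f /\ g = f^`M(i).

Lemma strongly_golod_mderiv_sqr I f i :
  strongly_golod I -> I f -> I (f^`M(i) * f^`M(i)).
Proof.
move=> HI If; apply: HI; apply: gen_ideal_sub.
by exists f^`M(i), f^`M(i); split=> //; apply: gen_ideal_sub; exists f, i.
Qed.

Section AddPow.
Variables (I P : pset K n) (m : nat).
Hypotheses (HI : is_ideal I) (HgI : strongly_golod I) (HP : is_ideal P).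
Hypotheses (Pprime : forall x y, P (x * y) -> P x \/ P y) (sIP : subset_of I P).

Let J := ideal_add I (ideal_pow P m.+2).

Definition add_pow_deriv_gens : pset K n :=
  fun g => [\/ deriv_image I g, I g | ideal_pow P m.+1 g].

Lemma deriv_ideal_add_pow_sub :
  subset_of (deriv_ideal J) (gen_ideal add_pow_deriv_gens).
Proof.
have HQ := gen_ideal_is_ideal add_pow_deriv_gens.
apply: gen_ideal_min => // _ [f [i [Jf ->]]].
apply: gen_ideal_mderiv Jf => //.
- move=> x [Ix | Px]; apply: gen_ideal_sub; [by constructor 2 |].
  by constructor 3; apply: ideal_powS_sub.
- move=> g j [Ig | Pg]; apply: gen_ideal_sub.
  + by constructor 1; exists g, j.
  + by constructor 3; apply: mderiv_ideal_pow.
Qed.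

Lemma mderiv_mem_prime f i : I f -> P f^`M(i).
Proof.
by move=> If; case/Pprime: (sIP (strongly_golod_mderiv_sqr i HgI If)).
Qed.

Lemma add_pow_deriv_gens_mul x y :
  add_pow_deriv_gens x -> add_pow_deriv_gens y -> J (x * y).
Proof.
have JI z : I z -> J z by move=> Iz; apply: gen_ideal_sub; left.
have JP z : ideal_pow P m.+2 z -> J z by move=> Pz; apply: gen_ideal_sub; right.
have dIP z : deriv_image I z -> P z by case=> [f [i [If ->]]]; apply: mderiv_mem_prime.
have PmP z : ideal_pow P m.+1 z -> P z by apply: ideal_pow1_sub.
rewrite /add_pow_deriv_gens => -[dIx | Ix | Px] [dIy | Iy | Py];
  try by apply: JI; first [exact: (idealMr _ HI) | exact: (idealMl _ HI)].
- apply: JI; apply: HgI; apply: gen_ideal_sub.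
  by exists x, y; split=> //; apply: gen_ideal_sub.
- by apply: JP; rewrite mulrC; apply: ideal_pow_mul; last apply: dIP.
- by apply: JP; apply: ideal_pow_mul; last apply: dIP.
- by apply: JP; apply: ideal_pow_mul; last apply: PmP.
Qed.

Lemma strongly_golod_add_pow : strongly_golod J.
Proof.
move=> z /(ideal_mul_mono deriv_ideal_add_pow_sub deriv_ideal_add_pow_sub).
by apply: ideal_mul_gen_sub; [apply: gen_ideal_is_ideal | apply: add_pow_deriv_gens_mul].
Qed.

End AddPow.

End Ideals.

Theorem corollary2p2 (K : fieldType) (n : nat) (a : 'I_n -> nat)
    (I P : pset K n) :
  [pchar K] =i pred0 ->
  (forall i, (0 < a i)%N) ->
  graded_ideal a I -> is_proper_ideal I -> strongly_golod I ->
  graded_ideal a P -> is_prime_ideal P -> subset_of I P ->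
  forall k : nat, (2 <= k)%N -> strongly_golod (ideal_add I (ideal_pow P k)).
Proof.
move=> _ _ [HI _] _ HgI [HP _] [_ Pprime] sIP [|[|m]] // _.
exact: strongly_golod_add_pow.
Qed.
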